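(* Let $\gamma=\gamma_1\cup\gamma_2$ be a finite set of interactions with $\mathit{Act}(\gamma_1)\cap\mathit{Act}(\gamma_2)=\emptyset$. Then $\mathcal{E}(\gamma)\equiv\mathcal{E}(\gamma_1)\wedge\mathcal{E}(\gamma_2)$, i.e. the two formulas are satisfied by exactly the same assignments of real values to the history clocks $h_a$, $a\in\mathit{Act}(\gamma)$.
   Context: An interaction is a finite nonempty set of actions; for a set of interactions $\gamma$, $\mathit{Act}(\gamma)=\bigcup_{\alpha\in\gamma}\alpha$. Each action $a$ has an associated real variable (history clock) $h_a$. For a set of interactions $\gamma$ and a set of actions $\alpha$, $\gamma\ominus\alpha=\{\beta\setminus\alpha\mid\beta\in\gamma,\ \beta\not\subseteq\alpha\}$. Define recursively $\mathcal{E}(\emptyset)=\mathit{true}$ and, for $\gamma\neq\emptyset$, $\mathcal{E}(\gamma)=\bigvee_{\alpha\in\gamma}\Big(\bigwedge_{a_i,a_j\in\alpha}h_{a_i}=h_{a_j}\ \wedge\bigwedge_{a_i\in\alpha,\ a_k\in\mathit{Act}(\gamma\ominus\alpha)}h_{a_i}\le h_{a_k}\ \wedge\ \mathcal{E}(\gamma\ominus\alpha)\Big)$. *)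

From HB Require Import structures.
From mathcomp Require Import all_boot all_order all_algebra.
Set Implicit Arguments. Unset Strict Implicit. Unset Printing Implicit Defensive.
Import Order.TTheory GRing.Theory Num.Theory.

(* Actions range over a finite type A; an interaction is a (nonempty) set of
   actions, a set of interactions is an element of {set {set A}}. *)

Definition Act (A : finType) (g : {set {set A}}) : {set A} :=
  \bigcup_(b in g) b.

Definition ominus (A : finType) (g : {set {set A}}) (a : {set A}) : {set {set A}} :=
  [set b :\: a | b in [set b in g | ~~ (b \subset a)]].

(* Satisfaction of the formula E(gamma) by the clock valuation h : A -> R.
   E is defined by well-founded recursion (|gamma (-) alpha| < |gamma| for
   alpha in gamma); we give its semantics as the inductive predicate
   corresponding to the recursive clauses:
     E(empty) = true,
     E(gamma) = \/_{alpha in gamma} ( /\_{ai,aj in alpha} h ai = h aj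
                  /\ /\_{ai in alpha, ak in Act(gamma (-) alpha)} h ai <= h ak
                  /\ E(gamma (-) alpha) ). *)
Inductive Esat (A : finType) (R : realFieldType) (h : A -> R)
  : {set {set A}} -> Prop :=
| Esat_nil : Esat h set0
| Esat_step (g : {set {set A}}) (a : {set A}) :
    a \in g ->
    (forall ai aj, ai \in a -> aj \in a -> h ai = h aj) ->
    (forall ai ak, ai \in a -> ak \in Act (ominus g a) -> (h ai <= h ak)%R) ->
    Esat h (ominus g a) ->
    Esat h g.

From HB Require Import structures.
From mathcomp Require Import all_boot all_order all_algebra.
Set Implicit Arguments. Unset Strict Implicit. Unset Printing Implicit Defensive.
Import Order.TTheory.

(* A derivation of E(gamma) fires the interactions of gamma one at a time.
   An interaction that can fire first has the least clock value in Act(gamma),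
   and firing it leaves interactions on disjoint actions untouched. Hence a
   firing order for gamma1 :|: gamma2 restricts to firing orders of gamma1 and
   gamma2; conversely two firing orders merge by always firing next the
   interaction with the smaller clock value. *)

Section Ominus.
Variable A : finType.
Implicit Types (g : {set {set A}}) (a b : {set A}).

Lemma ActU g1 g2 : Act (g1 :|: g2) = Act g1 :|: Act g2.
Proof. exact: bigcup_setU. Qed.

Lemma sub_Act g b : b \in g -> b \subset Act g.
Proof. exact: bigcup_sup. Qed.

Lemma Act_ominus g a : Act (ominus g a) = Act g :\: a.
Proof.
apply/setP => x; rewrite /Act inE; apply/bigcupP/andP.
  move=> [c /imsetP [b]]; rewrite inE => /andP [bg _] ->.
  by rewrite inE => /andP [xa xb]; split => //; apply/bigcupP; exists b.
move=> [xa /bigcupP [b bg xb]]; exists (b :\: a); last by rewrite inE xa.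
apply/imsetP; exists b => //; rewrite inE bg.
by apply/negP => /subsetP /(_ x xb); rewrite (negbTE xa).
Qed.

Lemma ominusU g1 g2 a : ominus (g1 :|: g2) a = ominus g1 a :|: ominus g2 a.
Proof.
rewrite /ominus -imsetU.
have -> // : [set b in g1 :|: g2 | ~~ (b \subset a)] =
  [set b in g1 | ~~ (b \subset a)] :|: [set b in g2 | ~~ (b \subset a)].
by apply/setP => b; rewrite !inE andb_orl.
Qed.

Lemma ominus_disjoint g a :
  set0 \notin g -> [disjoint a & Act g] -> ominus g a = g.
Proof.
move=> g0 dis.
have Da b : b \in g -> b :\: a = b /\ ~~ (b \subset a).
  move=> bg; have dba : [disjoint b & a].
    by rewrite disjoint_sym (disjointWr (sub_Act bg) dis).
  have nb0 : b != set0 by apply: contraNneq g0 => <-.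
  by split; [exact/setDidPl | exact: (subsetC_disjoint dba nb0)].
apply/setP => b; apply/imsetP/idP => [[c]|bg].
  by rewrite inE => /andP [cg _] ->; rewrite (Da c cg).1.
by have [Db nba] := Da b bg; exists b; rewrite ?inE ?bg.
Qed.

Lemma set0_notin_ominus g a : set0 \notin ominus g a.
Proof.
apply/imsetP => [[b]]; rewrite inE => /andP [_ nba] /esym /eqP.
by rewrite setD_eq0 (negbTE nba).
Qed.

Lemma card_ominus_lt g a : a \in g -> #|ominus g a| < #|g|.
Proof.
move=> ag; apply: leq_ltn_trans (leq_imset_card _ _) (proper_card _).
apply/properP; split; first by apply/subsetP => b; rewrite inE => /andP [].
by exists a; rewrite // inE ag subxx.
Qed.

Lemma disjoint_Act_ominus g1 g2 a :
  [disjoint Act g1 & Act g2] -> [disjoint Act (ominus g1 a) & Act g2].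
Proof. by rewrite Act_ominus; apply: disjointWl (subsetDl _ _). Qed.

End Ominus.

Section Peeling.
Variables (A : finType) (R : realFieldType) (h : A -> R).
Implicit Types (g : {set {set A}}) (a : {set A}).

Definition fires_first g a :=
  [/\ a \in g, {in a &, forall x y, h x = h y}
    & {in a & Act (ominus g a), forall x y, (h x <= h y)%R}].

Lemma Esat_fire g a : fires_first g a -> Esat h (ominus g a) -> Esat h g.
Proof. by case=> ag eqa lea; apply: Esat_step. Qed.

Lemma EsatP g :
  Esat h g -> g = set0 \/ exists2 a, fires_first g a & Esat h (ominus g a).
Proof. by case=> [|g' a ag eqa lea E]; [left | right; exists a]. Qed.

Lemma fires_first_min g a :
  fires_first g a -> {in a & Act g, forall x y, (h x <= h y)%R}.
Proof.
case=> ag eqa lea x y xa yg; have [ya|nya] := boolP (y \in a).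
  by rewrite (eqa x y).
by apply: lea; rewrite // Act_ominus inE nya.
Qed.

Lemma fires_first_sub g g' a :
  a \in g -> g \subset g' -> fires_first g' a -> fires_first g a.
Proof.
move=> ag sgg' [_ eqa lea]; split=> // x y xa; rewrite Act_ominus => yg.
apply: lea; rewrite // Act_ominus !inE in yg *.
case/andP: yg => -> /bigcupP [b bg yb].
by apply/bigcupP; exists b; rewrite ?(subsetP sgg').
Qed.

Lemma fires_firstU g1 g2 a : fires_first g1 a ->
  {in a & Act g2, forall x y, (h x <= h y)%R} -> fires_first (g1 :|: g2) a.
Proof.
move=> [ag eqa lea] le_a2; split; rewrite ?inE ?ag //.
move=> x y xa; rewrite Act_ominus ActU !inE => /andP [nya /orP [yg1|yg2]].
  by apply: lea; rewrite // Act_ominus inE nya.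
exact: le_a2.
Qed.

Lemma fires_first_le_total g1 g2 a1 a2 :
  set0 \notin g1 -> set0 \notin g2 -> fires_first g1 a1 -> fires_first g2 a2 ->
  {in a1 & Act g2, forall x y, (h x <= h y)%R} \/
  {in a2 & Act g1, forall x y, (h x <= h y)%R}.
Proof.
move=> n1 n2 ff1 ff2; have [[ag1 eq1 _] [ag2 eq2 _]] := (ff1, ff2).
have [x1 x1a] : {x | x \in a1} by apply/sigW/set0Pn; apply: contraNneq n1 => <-.
have [x2 x2a] : {x | x \in a2} by apply/sigW/set0Pn; apply: contraNneq n2 => <-.
have [le12|/ltW le21] := leP (h x1) (h x2); [left | right] => x y xa yg.
  rewrite (eq1 x x1) //; apply: le_trans le12 _.
  exact: fires_first_min ff2 _ _ x2a yg.
rewrite (eq2 x x2) //; apply: le_trans le21 _.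
exact: fires_first_min ff1 _ _ x1a yg.
Qed.

Lemma Esat_split g1 g2 : set0 \notin g1 -> set0 \notin g2 ->
  [disjoint Act g1 & Act g2] -> Esat h (g1 :|: g2) -> Esat h g1 /\ Esat h g2.
Proof.
move=> n1 n2 dis E.
have [g {}E Eg] : exists2 g, Esat h g & g = g1 :|: g2 by exists (g1 :|: g2).
elim: E g1 g2 n1 n2 dis Eg => [|g' a ag eqa lea _ IH] g1 g2 n1 n2 dis.
  by move/esym/eqP; rewrite setU_eq0 => /andP [/eqP -> /eqP ->]; split; constructor.
move=> Eg; subst g'; have ff : fires_first (g1 :|: g2) a by [].
have [] := IH (ominus g1 a) (ominus g2 a); rewrite ?ominusU ?set0_notin_ominus //.
  by rewrite disjoint_Act_ominus // disjoint_sym disjoint_Act_ominus // disjoint_sym.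
clear IH eqa lea.
wlog ag1 : g1 g2 n1 n2 dis ag ff / a \in g1 => [sym|E1 E2].
  case/setUP: (ag) => [ag1|ag2]; first exact: sym.
  move=> E1 E2; have := sym g2 g1; rewrite setUC disjoint_sym.
  by case/(_ n2 n1 dis ag ff ag2 E2 E1).
have dis_a2 : [disjoint a & Act g2] := disjointWl (sub_Act ag1) dis.
rewrite ominus_disjoint // in E2; split => //.
exact: Esat_fire (fires_first_sub ag1 (subsetUl _ _) ff) E1.
Qed.

Lemma Esat_join g1 g2 : set0 \notin g1 -> set0 \notin g2 ->
  [disjoint Act g1 & Act g2] -> Esat h g1 -> Esat h g2 -> Esat h (g1 :|: g2).
Proof.
move: {2}(#|g1| + #|g2|).+1 (ltnSn (#|g1| + #|g2|)) => n.
elim: n g1 g2 => // n IH g1 g2 lt_n n1 n2 dis E1 E2.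
have join_first g g' a : #|g| + #|g'| <= n -> set0 \notin g' ->
    [disjoint Act g & Act g'] -> fires_first g a -> Esat h (ominus g a) ->
    {in a & Act g', forall x y, (h x <= h y)%R} -> Esat h g' -> Esat h (g :|: g').
  move=> le_n n' disg ff E' le_a E''; have ag : a \in g by case: ff.
  apply: Esat_fire (fires_firstU ff le_a) _.
  rewrite ominusU (ominus_disjoint n') ?(disjointWl (sub_Act ag) disg) //.
  apply: IH; rewrite ?set0_notin_ominus ?disjoint_Act_ominus //.
  by apply: leq_trans le_n; rewrite ltn_add2r card_ominus_lt.
have [->|[a1 ff1 E1']] := EsatP E1; first by rewrite set0U.
have [->|[a2 ff2 E2']] := EsatP E2; first by rewrite setU0.
have [le_a1|le_a2] := fires_first_le_total n1 n2 ff1 ff2.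
  exact: (join_first _ _ _ lt_n n2 dis ff1 E1').
rewrite setUC; apply: (join_first _ _ _ _ n1 _ ff2 E2') => //.
- by rewrite addnC.
- by rewrite disjoint_sym.
Qed.

End Peeling.

Theorem proposition3 (A : finType) (R : realFieldType)
  (g1 g2 : {set {set A}}) :
  set0 \notin g1 -> set0 \notin g2 ->
  [disjoint Act g1 & Act g2] ->
  forall h : A -> R, Esat h (g1 :|: g2) <-> (Esat h g1 /\ Esat h g2).
Proof.
move=> n1 n2 dis h; split; first exact: Esat_split.
by case; apply: Esat_join.
Qed.
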